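(* Let $h_1,\dots,h_p\in G_0$ and let $k_1,\dots,k_p$ be positive integers. If $D_{\widehat{h_p}\cdots\widehat{h_1}}=\emptyset$ then $\xi_{h_1}^{(k_1)}\xi_{h_2}^{(k_2)}\cdots\xi_{h_p}^{(k_p)}=0$. If $D_{\widehat{h_p}\cdots\widehat{h_1}}\neq\emptyset$, then the $i$-th row of the matrix $\xi_{h_1}^{(k_1)}\cdots\xi_{h_p}^{(k_p)}$ is nonzero if and only if $i\in D_{\widehat{h_p}\cdots\widehat{h_1}}$, and in this case, with $j=\widehat{h_p}\cdots\widehat{h_1}(i)$, the only nonzero entry of the $i$-th row is in the $j$-th column and is a monomial of $\Omega$.
   Context: Let $F$ be an infinite field, $G$ a group, $(g_1,\dots,g_n)\in G^n$ with pairwise distinct entries, and give $A=M_n(F)$ the elementary grading: $A_g$ is spanned by the matrix units $e_{ij}$ with $g_i^{-1}g_j=g$. Let $B$ be the subalgebra of $M_n(F)$ with vector space basis a set of matrix units $\{e_{i_1j_1},\dots,e_{i_lj_l}\}$, graded by $B_g=B\cap A_g$, and $G_0=\{g: B_g\neq0\}$. For $g\in G_0$ let $D_{\widehat g}$ be the set of indices $i$ such that $e_{ij}\in B_g$ for some $j$; since the $g_i$ are pairwise distinct such $j$ is unique, denoted $\widehat g(i)$, giving a partial map $\widehat g$ with domain $D_{\widehat g}$. For $h_1,\dots,h_p\in G_0$, $\widehat{h_p}\cdots\widehat{h_1}$ denotes the composition of these partial maps and $D_{\widehat{h_p}\cdots\widehat{h_1}}$ is the set of $i\in\{i_1,\dots,i_l\}$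 for which $\widehat{h_p}(\cdots(\widehat{h_1}(i))\cdots)$ is defined. Let $\Omega=F[\xi_{ij}^{(k)}: i,j=1,\dots,n;\ k=1,2,\dots]$ be the commutative polynomial ring, and for $g\in G_0$, $k\ge1$ define the graded generic element $\xi_g^{(k)}=\sum_{i\in D_{\widehat g}}\xi^{(k)}_{i\widehat g(i)}e_{i\widehat g(i)}\in M_n(\Omega)$. *)

From HB Require Import structures.
From mathcomp Require Import all_boot all_algebra.
From mathcomp Require Import finmap.
From mathcomp.multinomials Require Import monalg.
Set Implicit Arguments.
Unset Strict Implicit.
Unset Printing Implicit Defensive.
Import GRing.Theory.
Local Open Scope ring_scope.

(* Omega = F[xi_{ij}^{(k)} : i,j < n, k in nat]: the commutative polynomial
   ring over F in the (countably many) variables indexed by triples (i,j,k),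
   realized as the monoid algebra of the free commutative monoid on
   'I_n * 'I_n * nat. Only indices k >= 1 are ever used. *)
Definition Omega (F : fieldType) (n : nat) :=
  {malg F[(cmonom ('I_n * 'I_n * nat)%type)]}.

Definition xvar (F : fieldType) (n : nat) (i j : 'I_n) (k : nat) : Omega F n :=
  << ucm (i, j, k) >>.

Definition is_monomial (F : fieldType) (n : nat) (x : Omega F n) : Prop :=
  exists m : (cmonom ('I_n * 'I_n * nat)%type), x = << m >>.

Section Grading.
Variables (G : eqType) (mul : G -> G -> G) (inv : G -> G).
Variables (n : nat) (gs : 'I_n -> G) (S : {set 'I_n * 'I_n}).

(* homogeneous degree g_i^{-1} g_j of e_ij *)
Definition edeg (i j : 'I_n) : G := mul (inv (gs i)) (gs j).

Definition inBg (g : G) (i j : 'I_n) : bool := ((i, j) \in S) && (edeg i j == g).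

Definition inG0 (g : G) : Prop := exists i j, inBg g i j.

(* the partial map \hat g : i |-> the unique j with e_ij in B_g *)
Definition hatg (g : G) (i : 'I_n) : option 'I_n := [pick j | inBg g i j].

(* \hat{h_p} o ... o \hat{h_1} applied to i, for hs = [:: h_1; ...; h_p] *)
Definition compmap (hs : seq G) (i : 'I_n) : option 'I_n :=
  foldl (fun o g => obind (hatg g) o) (Some i) hs.

(* D_{\hat{h_p} ... \hat{h_1}} : indices i in {i_1,...,i_l} where defined *)
Definition Dcomp (hs : seq G) : {set 'I_n} :=
  [set i | [exists j, (i, j) \in S] && (compmap hs i != None)].

Definition xi (F : fieldType) (g : G) (k : nat) : 'M[Omega F n]_n :=
  \matrix_(i, j) (if hatg g i == Some j then xvar F i j k else 0).

End Grading.

From HB Require Import structures.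
From mathcomp Require Import all_boot all_algebra.
From mathcomp Require Import finmap.
From mathcomp.multinomials Require Import monalg.
Import GRing.Theory.
Local Open Scope ring_scope.

(* Left-multiplying by [xi g k] moves row [ĝ(i)] of a matrix up to row [i],
   scaled by the single variable xi_{i ĝ(i)}^{(k)}.  By induction on the
   number of factors, row [i] of a product of graded generic elements is
   therefore supported on the single column [ĥ_p ⋯ ĥ_1 (i)], where it holds
   a product of variables.  Nothing about the grading is used beyond the
   partial maps ĥ. *)

Lemma monalgUM (K : choiceType) (R : fieldType) (a b : cmonom K) :
  (<< a >> : {malg R[cmonom K]}) * << b >> = << mmul a b >>.
Proof. by rewrite (malgMEw msuppU_le msuppU_le) !big_seq_fset1 !mcoeffUU mulr1. Qed.

Section ProductOfGenericElements.
Variables (G : eqType) (mul : G -> G -> G) (inv : G -> G).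
Variables (n : nat) (gs : 'I_n -> G) (S : {set 'I_n * 'I_n}) (F : fieldType).

Local Notation hatg := (hatg mul inv gs S).
Local Notation compmap := (compmap mul inv gs S).
Local Notation xi := (xi mul inv gs S F).

Lemma compmap_cons g hs i : compmap (g :: hs) i = obind (compmap hs) (hatg g i).
Proof.
rewrite /compmap /=; case: (hatg g i) => [j|] /=; last by elim: hs.
by elim: hs (Some j) => [|g' hs IH] [l|] //=; rewrite ?IH.
Qed.

Lemma mem_Dcomp hs i :
  hs != [::] -> (i \in Dcomp mul inv gs S hs) = (compmap hs i != None).
Proof.
case: hs => [//|g hs] _; rewrite inE compmap_cons.
case: (hatg g i) / pickP => [j /andP[ijS _]|_] /=; last by rewrite andbF.
by rewrite (_ : [exists j, _] = true) //; apply/existsP; exists j.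
Qed.

Lemma xi_mul_entry g k (M : 'M[Omega F n]_n) i j :
  (xi g k *m M) i j = if hatg g i is Some l then xvar F i l k * M l j else 0.
Proof.
rewrite mxE; case E: (hatg g i) => [l|]; last first.
  by rewrite big1 // => l _; rewrite mxE E mul0r.
rewrite (bigD1 l) //= big1 => [|l' l'l]; first by rewrite mxE E eqxx addr0.
by rewrite mxE E (inj_eq Some_inj) eq_sym (negPf l'l) mul0r.
Qed.

Lemma prod_xi_row (l : seq (G * nat)) i :
  exists m : cmonom ('I_n * 'I_n * nat)%type, forall j,
    (\prod_(x <- l) xi x.1 x.2) i j =
      if compmap (map fst l) i == Some j then << m >> else 0.
Proof.
elim: l i => [|[g k] l IH] i.
  exists mone => j; rewrite big_nil mxE.
  by have -> : compmap [::] i = Some i by []; rewrite (inj_eq Some_inj); case: eqP.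
rewrite big_cons /=; case E: (hatg g i) => [l0|]; last first.
  by exists mone => j; rewrite -mulmxE xi_mul_entry E compmap_cons E.
have [m Hm] := IH l0; exists (mmul (ucm (i, l0, k)) m) => j.
rewrite -mulmxE xi_mul_entry E compmap_cons E /= Hm.
by case: eqP => _; rewrite ?mulr0 // monalgUM.
Qed.

End ProductOfGenericElements.

Theorem mainTheorem3
  (F : fieldType) (F_infinite : forall s : seq F, exists x : F, x \notin s)
  (G : eqType) (mul : G -> G -> G) (inv : G -> G) (one : G)
  (mulA : forall x y z, mul x (mul y z) = mul (mul x y) z)
  (mul1g : forall x, mul one x = x)
  (mulVg : forall x, mul (inv x) x = one)
  (n : nat) (gs : 'I_n -> G) (gs_inj : injective gs)
  (S : {set 'I_n * 'I_n})
  (S_subalg : forall i j l : 'I_n, (i, j) \in S -> (j, l) \in S -> (i, l) \in S)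
  (p : nat) (p_pos : (0 < p)%N) (h : 'I_p -> G) (k : 'I_p -> nat)
  (h_G0 : forall t, inG0 mul inv gs S (h t))
  (k_pos : forall t, (0 < k t)%N) :
  let hs := [seq h t | t <- enum 'I_p] in
  let D := Dcomp mul inv gs S hs in
  let P := \prod_(t < p) xi mul inv gs S F (h t) (k t) in
  (D = set0 -> P = 0) /\
  (D != set0 ->
   forall i : 'I_n,
     (row i P != 0 <-> i \in D) /\
     (i \in D -> forall j : 'I_n, compmap mul inv gs S hs i = Some j ->
        P i j != 0 /\ is_monomial (P i j) /\
        (forall j' : 'I_n, j' != j -> P i j' = 0))).
Proof.
move=> hs D P.
pose l := [seq (h t, k t) | t <- enum 'I_p].
have P_row i : exists m, forall j,
    P i j = if compmap mul inv gs S hs i == Some j then << m >> else 0.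
  have -> : hs = map fst l by rewrite -map_comp.
  have -> : P = \prod_(x <- l) xi mul inv gs S F x.1 x.2.
    by rewrite /P big_map enumT [index_enum _]unlock.
  exact: prod_xi_row.
have memD i : (i \in D) = (compmap mul inv gs S hs i != None).
  by apply: mem_Dcomp; rewrite -size_eq0 size_map size_enum_ord -lt0n.
split=> [D0|_ i].
  apply/matrixP => i j; have [m ->] := P_row i.
  by move: (memD i); rewrite D0 inE mxE; case: eqP => // ->.
have [m Pi] := P_row i; rewrite memD.
case: (compmap _ _ _ _ hs i) Pi => [j|] Pi; last first.
  have row0 : row i P = 0 by apply/rowP => j; rewrite !mxE Pi.
  by rewrite row0 eqxx.
have Pij : P i j != 0 by rewrite Pi eqxx monalgU_eq0 oner_eq0.
split=> [|_ _ [<-]].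
  by split=> // _; apply: contraNneq Pij => /rowP/(_ j); rewrite !mxE => ->.
split=> //; split; first by exists m; rewrite Pi eqxx.
by move=> j' j'j; rewrite Pi (inj_eq Some_inj) eq_sym (negPf j'j).
Qed.
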